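(* Let $S$ be a semigroup and let $A$ be a skeleton of $S$. Then the subsemigroup $\langle A\rangle$ generated by $A$ is a regular subsemigroup of $S$.
   Context: For a nonempty set $X$ and a symbol $1\notin X$: elements of height $\ge 2$ are triples $g=(g^l,g^c,g^r)$; $\Gamma_0(X)=\{1\}$, $\Gamma_1(X)=X$, each $x\in X$ identified with $(1,x,1)$; for $i\ge 2$, $\Gamma_i(X)$ is the set of triples $g\in\Gamma_{i-1}(X)\times\Gamma_{i-2}(X)\times\Gamma_{i-1}(X)$ with $g^l\neq g^r$ and $g^c\in\{(g^l)^l,(g^l)^r\}\cap\{(g^r)^l,(g^r)^r\}$; $\Gamma(X)=\bigcup_{i\ge0}\Gamma_i(X)$. $S^1$ is $S$ with an identity adjoined if necessary; $E(\cdot)$ is the set of idempotents. For idempotents $e,f$ of a semigroup $R$, $S(e,f)=\{h\in E(R): fh=h=he,\ ehf=ef\}$. A skeleton mapping is a mapping $\phi:\Gamma(X)\to E(S^1)$ such that (i) $\phi|_X$ is one-to-one with $X\phi\subseteq E(S)$; (ii) $(1\phi)(g\phi)=g\phi=(g\phi)(1\phi)$ for all $g\in X$; (iii) $g\phi\in S\big((g^r\phi)(g^c\phi),(g^c\phi)(g^l\phi)\big)$ (in $S^1$) for all $g\in\Gamma_i(X)$, $i\ge2$. A skeleton of $S$ is a set of the form $(\Gamma(X)\setminus\{1\})\phi$ for some nonempty set $X$ and some skeleton mapping $\phi:\Gamma(X)\to E(S^1)$. *)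

Set Implicit Arguments.

(* S^1 : S with an identity adjoined; the adjoined identity is None. *)
Definition mul1 (T : Type) (op : T -> T -> T) (a b : option T) : option T :=
  match a, b with
  | None, _ => b
  | _, None => a
  | Some x, Some y => Some (op x y)
  end.

Definition idem1 (T : Type) (op : T -> T -> T) (e : option T) : Prop :=
  mul1 op e e = e.

Definition sandwich (T : Type) (op : T -> T -> T) (e f h : option T) : Prop :=
  idem1 op h /\ mul1 op f h = h /\ mul1 op h e = h /\
  mul1 op (mul1 op e h) f = mul1 op e f.

(* Elements of Gamma(X) are represented as trees: G1 is the symbol 1,
   Gx x is x in X (identified with the triple (1,x,1)), Gt l c r is a
   triple (l,c,r). *)
Inductive gam (X : Type) : Type :=
| G1 : gam X
| Gx : X -> gam X
| Gt : gam X -> gam X -> gam X -> gam X.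
Arguments G1 {X}.

Definition gl (X : Type) (g : gam X) : gam X :=
  match g with G1 => G1 | Gx _ => G1 | Gt l _ _ => l end.
Definition gc (X : Type) (g : gam X) : gam X :=
  match g with G1 => G1 | Gx x => Gx x | Gt _ c _ => c end.
Definition gr (X : Type) (g : gam X) : gam X :=
  match g with G1 => G1 | Gx _ => G1 | Gt _ _ r => r end.

Fixpoint inGamma (X : Type) (i : nat) (g : gam X) {struct i} : Prop :=
  match i with
  | 0 => g = G1
  | 1 => exists x, g = Gx x
  | S ((S i') as j) =>
      exists l c r, g = Gt l c r /\
        inGamma j l /\ inGamma i' c /\ inGamma j r /\
        l <> r /\
        (c = gl l \/ c = gr l) /\ (c = gl r \/ c = gr r)
  end.

Definition Gamma (X : Type) (g : gam X) : Prop := exists i, inGamma i g.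

Definition skeleton_mapping (T : Type) (op : T -> T -> T) (X : Type)
    (phi : gam X -> option T) : Prop :=
  (forall g, Gamma g -> idem1 op (phi g)) /\
  (forall x y : X, phi (Gx x) = phi (Gx y) -> x = y) /\
  (forall x : X, exists s : T, phi (Gx x) = Some s /\ op s s = s) /\
  (forall x : X, mul1 op (phi G1) (phi (Gx x)) = phi (Gx x) /\
                 mul1 op (phi (Gx x)) (phi G1) = phi (Gx x)) /\
  (forall (i : nat) (g : gam X), 2 <= i -> inGamma i g ->
     sandwich op (mul1 op (phi (gr g)) (phi (gc g)))
                 (mul1 op (phi (gc g)) (phi (gl g))) (phi g)).

Definition is_skeleton (T : Type) (op : T -> T -> T) (A : T -> Prop) : Prop :=
  exists (X : Type) (phi : gam X -> option T),
    inhabited X /\ skeleton_mapping op phi /\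
    (forall g, Gamma g -> g <> G1 -> exists s, phi g = Some s /\ A s) /\
    (forall s, A s -> exists g, Gamma g /\ g <> G1 /\ phi g = Some s).

Inductive generated (T : Type) (op : T -> T -> T) (A : T -> Prop) : T -> Prop :=
| gen_base : forall a, A a -> generated op A a
| gen_op : forall a b, generated op A a -> generated op A b ->
           generated op A (op a b).

Definition regular_subsemigroup (T : Type) (op : T -> T -> T) (B : T -> Prop) : Prop :=
  (forall a b, B a -> B b -> B (op a b)) /\
  (forall a, B a -> exists x, B x /\ op (op a x) a = a).

(* For g = (l, c, r) in Gamma_(k+2) the sandwich conditions give
   phi c phi l phi g = phi g = phi g phi r phi c, and phi g phi d phi g = phi g
   for each component d of g.  A chain is a walk t_0, ..., t_n in Gamma_(k+1)
   whose consecutive members share a component c_i; its value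
   phi t_0 phi c_1 phi t_1 ... phi c_n phi t_n is regular in <A>, by induction on
   n, because the triples (t_(i+1), c_i, t_i) form a shorter chain one level up.
   A normal form is a chain value followed by the values along a path of
   successive components below t_n; that path can be undone on the right, so
   normal forms are regular in <A> too.  Multiplying a normal form on the right
   by phi t gives an element L-related in <A>^1 to a normal form ending at t
   (induction on the level of t, using phi t = phi c phi l phi t).  So every
   element of <A> is L-related to a regular element of <A>, hence regular. *)

From Stdlib Require Import Arith Lia Classical Setoid.

Set Implicit Arguments.
Unset Strict Implicit.

Lemma nat_ind2 (P : nat -> Prop) :
  P 0 -> P 1 -> (forall n, P n -> P (S n) -> P (S (S n))) -> forall n, P n.
Proof.
  intros H0 H1 HS.
  apply Nat.pair_induction; [now intros ? ? -> | exact H0 | exact H1 | exact HS].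
Qed.

Section SkeletonRegular.

Variables (T : Type) (op : T -> T -> T).
Hypothesis assoc : forall a b c : T, op a (op b c) = op (op a b) c.

Local Infix "**" := (mul1 op) (at level 40, left associativity).

Lemma mul1_assoc a b c : a ** (b ** c) = a ** b ** c.
Proof. destruct a, b, c; simpl; rewrite ?assoc; reflexivity. Qed.

Lemma mul1_unit_l a : None ** a = a.
Proof. now destruct a. Qed.

Lemma mul1_unit_r a : a ** None = a.
Proof. now destruct a. Qed.

Ltac normalize := repeat rewrite mul1_assoc.
Tactic Notation "normalize" "in" hyp(H) := repeat rewrite mul1_assoc in H.

(* Rewrites with a left-associated product equation [a ** b ** c = d], also
   where the product occurs behind a prefix, as in [p ** a ** b ** c]. *)
Ltac rw_prod E :=
  first [ rewrite E
        | let H := fresh in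
          pose proof (fun p => f_equal (mul1 op p) E) as H; cbv beta in H;
          repeat setoid_rewrite mul1_assoc in H; rewrite H; clear H ].

Variable A : T -> Prop.

Definition in_gen (o : option T) : Prop := exists a, o = Some a /\ generated op A a.
Definition in_gen1 (o : option T) : Prop := o = None \/ in_gen o.

Lemma in_gen_mul x y : in_gen x -> in_gen y -> in_gen (x ** y).
Proof.
  intros (a & -> & Ha) (b & -> & Hb).
  exists (op a b). split; [reflexivity | now constructor 2].
Qed.

Lemma in_gen_mul1r x y : in_gen x -> in_gen1 y -> in_gen (x ** y).
Proof. intros Hx [-> | Hy]; [now rewrite mul1_unit_r | now apply in_gen_mul]. Qed.

Lemma in_gen1_mul x y : in_gen1 x -> in_gen1 y -> in_gen1 (x ** y).
Proof.
  intros [-> | Hx] Hy; [now rewrite mul1_unit_l |].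
  right. now apply in_gen_mul1r.
Qed.

Definition regular_in_gen (w : option T) : Prop := exists q, in_gen q /\ w ** q ** w = w.

Definition L_related (x y : option T) : Prop :=
  exists a b, in_gen1 a /\ in_gen1 b /\ x = a ** y /\ y = b ** x.

Lemma L_related_refl x : L_related x x.
Proof. exists None, None. repeat split; try now left. all: now rewrite mul1_unit_l. Qed.

Lemma L_related_trans x y z : L_related x y -> L_related y z -> L_related x z.
Proof.
  intros (a1 & b1 & Ha1 & Hb1 & E1 & F1) (a2 & b2 & Ha2 & Hb2 & E2 & F2).
  exists (a1 ** a2), (b2 ** b1). repeat split; try now apply in_gen1_mul.
  - rewrite E1, E2. now normalize.
  - rewrite F2, F1. now normalize.
Qed.

Lemma L_related_mul_r x y z : L_related x y -> L_related (x ** z) (y ** z).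
Proof.
  intros (a & b & Ha & Hb & E & F). exists a, b. repeat split; auto.
  - rewrite E. now normalize.
  - rewrite F. now normalize.
Qed.

Lemma L_related_regular x w : L_related x w -> regular_in_gen w -> regular_in_gen x.
Proof.
  intros (a & b & Ha & Hb & -> & Ew) (q & Hq & Eq).
  exists (q ** b). split; [now apply in_gen_mul1r |].
  transitivity (a ** (w ** q ** (b ** (a ** w)))); [now normalize |].
  now rewrite <- Ew, Eq.
Qed.

Variable X : Type.
Implicit Types g s t u v : gam X.

Definition component (d g : gam X) : Prop := d = gl g \/ d = gr g.

Lemma level_SS_inv k g : inGamma (S (S k)) g ->
  inGamma (S k) (gl g) /\ inGamma k (gc g) /\ inGamma (S k) (gr g) /\
  component (gc g) (gl g) /\ component (gc g) (gr g).
Proof. intros (l & c & r & -> & ? & ? & ? & _ & ? & ?). unfold component; simpl. tauto. Qed.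

Lemma level_shape i g : inGamma i g ->
  match g with
  | G1 => i = 0
  | Gx _ => i = 1
  | Gt l _ _ => exists j, i = S (S j) /\ inGamma (S j) l
  end.
Proof.
  destruct i as [|[|i]]; simpl.
  - now intros ->.
  - now intros [x ->].
  - intros (l & c & r & -> & Hl & _). eauto.
Qed.

Lemma level_unique g i j : inGamma i g -> inGamma j g -> i = j.
Proof.
  revert i j. induction g as [| x | l IHl c _ r _]; intros i j Hi Hj;
    apply level_shape in Hi, Hj; try congruence.
  destruct Hi as (i' & -> & Hi), Hj as (j' & -> & Hj).
  do 2 f_equal. apply eq_add_S. eauto.
Qed.

Lemma level_Gamma g i : inGamma i g -> Gamma g.
Proof. now exists i. Qed.

Lemma level_S_not_unit g i : inGamma (S i) g -> g <> G1.
Proof. destruct i; [intros [x ->] | intros (l & c & r & -> & _)]; discriminate. Qed.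

Lemma level_triple k c t t' : inGamma (S k) t -> inGamma (S k) t' -> t <> t' ->
  inGamma k c -> component c t -> component c t' -> inGamma (S (S k)) (Gt t' c t).
Proof. intros. exists t', c, t. now repeat split. Qed.

Variable phi : gam X -> option T.
Hypothesis phi_idem_Gamma : forall g, Gamma g -> idem1 op (phi g).
Hypothesis phi_atom_unit : forall x : X,
  phi G1 ** phi (Gx x) = phi (Gx x) /\ phi (Gx x) ** phi G1 = phi (Gx x).
Hypothesis phi_sandwich : forall (i : nat) (g : gam X), 2 <= i -> inGamma i g ->
  sandwich op (phi (gr g) ** phi (gc g)) (phi (gc g) ** phi (gl g)) (phi g).
Hypothesis phi_in_A : forall g, Gamma g -> g <> G1 -> exists a, phi g = Some a /\ A a.

Lemma phi_in_gen g i : inGamma (S i) g -> in_gen (phi g).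
Proof.
  intros Hg. destruct (phi_in_A (level_Gamma Hg) (level_S_not_unit Hg)) as (a & E & Ha).
  exists a. split; [exact E | now constructor].
Qed.

Lemma phi_idem g i : inGamma i g -> phi g ** phi g = phi g.
Proof. intros Hg. exact (phi_idem_Gamma (level_Gamma Hg)). Qed.

Lemma phi_atom_unit_r g : inGamma 1 g -> phi g ** phi G1 = phi g.
Proof. intros [x ->]. apply phi_atom_unit. Qed.

Lemma phi_atom_unit_l g : inGamma 1 g -> phi G1 ** phi g = phi g.
Proof. intros [x ->]. apply phi_atom_unit. Qed.

Section Sandwich.
Variables (k : nat) (g : gam X).
Hypothesis Hg : inGamma (S (S k)) g.

Let Hsandwich := phi_sandwich (Nat.le_add_r 2 k) Hg.

Lemma sandwich_left : phi (gc g) ** phi (gl g) ** phi g = phi g.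
Proof. apply Hsandwich. Qed.

Lemma sandwich_right : phi g ** phi (gr g) ** phi (gc g) = phi g.
Proof. rewrite <- mul1_assoc. apply Hsandwich. Qed.

Lemma phi_centre_idem : phi (gc g) ** phi (gc g) = phi (gc g).
Proof. destruct (level_SS_inv Hg) as (_ & Hc & _). exact (phi_idem Hc). Qed.

Lemma phi_mul_centre : phi g ** phi (gc g) = phi g.
Proof.
  rewrite <- sandwich_right at 1. rewrite <- mul1_assoc, phi_centre_idem.
  apply sandwich_right.
Qed.

Lemma phi_centre_mul : phi (gc g) ** phi g = phi g.
Proof. rewrite <- sandwich_left at 1. normalize. rewrite phi_centre_idem. apply sandwich_left. Qed.

Lemma sandwich_core : phi (gr g) ** phi g ** phi (gl g) = phi (gr g) ** phi (gc g) ** phi (gl g).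
Proof.
  destruct Hsandwich as (_ & _ & _ & Hcore). normalize in Hcore.
  transitivity (phi (gr g) ** phi (gc g) ** phi g ** phi (gc g) ** phi (gl g)).
  - now rw_prod phi_mul_centre; rw_prod phi_centre_mul.
  - rewrite Hcore. now rw_prod phi_centre_idem.
Qed.
End Sandwich.

Lemma phi_component_absorb k g d : inGamma (S k) g -> component d g ->
  phi g ** phi d ** phi g = phi g.
Proof.
  intros Hg Hd. destruct k as [|k].
  - pose proof Hg as [x ->].
    destruct Hd as [-> | ->]; cbn [gl gr]; rewrite (phi_atom_unit_r Hg); exact (phi_idem Hg).
  - destruct Hd as [-> | ->].
    + rewrite <- (phi_mul_centre Hg) at 1. rw_prod (sandwich_left Hg). exact (phi_idem Hg).
    + rewrite <- (phi_centre_mul Hg) at 2. rewrite mul1_assoc, (sandwich_right Hg).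
      exact (phi_idem Hg).
Qed.

Lemma phi_level2_r u : inGamma 2 u -> phi u ** phi (gr u) = phi u.
Proof.
  intros Hu. pose proof (sandwich_right Hu) as E.
  destruct (level_SS_inv Hu) as (_ & Hc & Hr & _).
  simpl in Hc. rewrite Hc, <- mul1_assoc, (phi_atom_unit_r Hr) in E. exact E.
Qed.

Lemma phi_level2_l u : inGamma 2 u -> phi (gl u) ** phi u = phi u.
Proof.
  intros Hu. pose proof (sandwich_left Hu) as E.
  destruct (level_SS_inv Hu) as (Hl & Hc & _).
  simpl in Hc. rewrite Hc, (phi_atom_unit_l Hl) in E. exact E.
Qed.

Definition shared_component k (c t t' : gam X) : Prop :=
  inGamma k c /\ component c t /\ component c t'.

Inductive chain (k : nat) : gam X -> gam X -> nat -> option T -> Prop :=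
| chain_nil s : inGamma (S k) s -> chain k s s 0 (phi s)
| chain_cons s t n w c t' : chain k s t n w -> inGamma (S k) t' -> t <> t' ->
    shared_component k c t t' -> chain k s t' (S n) (w ** phi c ** phi t').

Lemma chain_level_start k s t n w : chain k s t n w -> inGamma (S k) s.
Proof. induction 1; assumption. Qed.

Lemma chain_level_end k s t n w : chain k s t n w -> inGamma (S k) t.
Proof. now destruct 1. Qed.

Lemma chain_phi_start k s t n w : chain k s t n w -> phi s ** w = w.
Proof.
  induction 1 as [s Hs | s t n w c t' _ IH]; [exact (phi_idem Hs) |].
  normalize. now rewrite IH.
Qed.

Lemma chain_phi_end k s t n w : chain k s t n w -> w ** phi t = w.
Proof.
  destruct 1 as [s Hs | s t n w c t' _ Ht']; [exact (phi_idem Hs) |].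
  now rewrite <- mul1_assoc, (phi_idem Ht').
Qed.

Lemma chain_centre_start k s t n w : chain (S k) s t n w -> phi (gc s) ** w = w.
Proof.
  intros H. rewrite <- (chain_phi_start H), mul1_assoc.
  now rewrite (phi_centre_mul (chain_level_start H)).
Qed.

Lemma chain_centre_end k s t n w : chain (S k) s t n w -> w ** phi (gc t) = w.
Proof.
  intros H. rewrite <- (chain_phi_end H), <- mul1_assoc.
  now rewrite (phi_mul_centre (chain_level_end H)).
Qed.

Lemma chain_0_inv k s t w : chain k s t 0 w -> t = s /\ w = phi s.
Proof. now inversion 1. Qed.

Lemma chain_cat k s t u n n' w w' :
  chain k s t n w -> chain k t u n' w' -> exists m, chain k s u m (w ** w').
Proof.
  intros Hst Htu. induction Htu as [t Ht | t u n' w' c u' _ IH Hu' Hne Hc].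
  - exists n. now rewrite (chain_phi_end Hst).
  - destruct (IH Hst) as [m Hm]. exists (S m). normalize. eapply chain_cons; eauto.
Qed.

Lemma chain_extend k s t v n w c : chain k s t n w -> inGamma (S k) v ->
  shared_component k c t v -> exists m, chain k s v m (w ** phi c ** phi v).
Proof.
  intros H Hv Hc. destruct (classic (t = v)) as [<- | Hne].
  - exists n. rewrite <- (chain_phi_end H) at 1.
    rw_prod (phi_component_absorb (chain_level_end H) (proj1 (proj2 Hc))).
    now rewrite (chain_phi_end H).
  - exists (S n). eapply chain_cons; eauto.
Qed.

(* The triples [(t_(i+1), c_i, t_i)] of a chain lie in Gamma_(k+2) and form a
   chain one level up, one step shorter, whose consecutive members share [t_i]. *)
Lemma chain_lift k s t n w : chain k s t (S n) w ->
  exists G G' w', chain (S k) G G' n w' /\ gr G = s /\ gl G' = t /\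
    w = phi s ** phi (gc G) ** w' ** phi (gc G') ** phi t.
Proof.
  intros H. remember (S n) as m eqn:Hm. revert n Hm.
  induction H as [s Hs | s t m w c t' H IH Ht' Hne Hc]; intros n Hm; [discriminate |].
  injection Hm as <-.
  set (G := Gt t' c t).
  assert (HG : inGamma (S (S k)) G).
  { destruct Hc as (? & ? & ?). apply level_triple; auto. exact (chain_level_end H). }
  assert (Hcm : phi c ** phi G = phi G) by exact (phi_centre_mul HG).
  assert (Hbridge : phi t ** phi G ** phi c ** phi t' = phi t ** phi c ** phi t').
  { assert (Hmc : phi G ** phi c = phi G) by exact (phi_mul_centre HG).
    rw_prod Hmc. exact (sandwich_core HG). }
  destruct m as [|m].
  - destruct (chain_0_inv H) as [-> ->].
    exists G, G, (phi G). split; [now constructor |]. repeat split. change (gc G) with c.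
    rw_prod Hcm. now rewrite Hbridge.
  - destruct (IH m eq_refl) as (G0 & G0' & w' & Hw' & Hr & Hl & ->).
    exists G0, G, (w' ** phi t ** phi G). repeat split; auto.
    + apply chain_cons with G0'; auto.
      * intros E. apply Hne. now rewrite <- Hl, E.
      * split; [exact (chain_level_end H) | split; [now left | now right]].
    + change (gc G) with c. rw_prod (chain_centre_end Hw'). normalize. now rw_prod Hbridge.
Qed.

Lemma chain_regular k s t n w : chain k s t n w -> regular_in_gen w.
Proof.
  revert k s t w. induction n as [|n IH]; intros k s t w H.
  - destruct (chain_0_inv H) as [-> ->]. exists (phi s).
    pose proof (chain_level_start H) as Hs.
    split; [exact (phi_in_gen Hs) |]. now rewrite !(phi_idem Hs).
  - destruct (chain_lift H) as (G & G' & w' & Hw' & Hr & Hl & ->).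
    destruct (IH _ _ _ _ Hw') as (q & Hq & Eq).
    pose proof (chain_level_start Hw') as HG. pose proof (chain_level_end Hw') as HG'.
    exists (phi G' ** q ** phi G). split.
    { apply in_gen_mul; [apply in_gen_mul |]; eauto using phi_in_gen. }
    subst s t. normalize.
    rw_prod (sandwich_left HG'). rw_prod (chain_phi_end Hw').
    rw_prod (sandwich_right HG). rw_prod (chain_phi_start Hw').
    now rw_prod Eq.
Qed.

(* [descent t k e b sg]: a path [t = e_k, e_(k-1), ..., e_b = e] in which each
   [e_i] lies in Gamma_(i+1) and is a component of [e_(i+1)]; its value is
   [sg = phi e_(k-1) ... phi e_b], the empty product [None] when [b = k]. *)
Inductive descent (t : gam X) (k : nat) : gam X -> nat -> option T -> Prop :=
| descent_nil : inGamma (S k) t -> descent t k t k None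
| descent_cons e b sg e' : descent t k e (S b) sg -> inGamma (S b) e' -> component e' e ->
    descent t k e' b (sg ** phi e').

Lemma descent_le t k e b sg : descent t k e b sg -> b <= k.
Proof. induction 1; lia. Qed.

Lemma descent_level_end t k e b sg : descent t k e b sg -> inGamma (S b) e.
Proof. now destruct 1. Qed.

Lemma descent_top_inv t k e sg : descent t k e k sg -> e = t /\ sg = None.
Proof. inversion 1 as [| ? ? ? ? Hd]; [easy |]. apply descent_le in Hd. lia. Qed.

Lemma descent_last t k e b sg : descent t k e b sg -> b < k ->
  exists e0 sg0, descent t k e0 (S b) sg0 /\ component e e0 /\ sg = sg0 ** phi e.
Proof. destruct 1; [lia | eauto]. Qed.

Lemma descent_phi_end t k e b sg : descent t k e b sg -> phi t ** sg ** phi e = phi t ** sg.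
Proof.
  destruct 1 as [Ht | e b sg e' _ He'].
  - rewrite !mul1_unit_r. exact (phi_idem Ht).
  - normalize. now rw_prod (phi_idem He').
Qed.

Lemma descent_cat t k e b u c sg tau :
  descent t k e b sg -> descent e b u c tau -> descent t k u c (sg ** tau).
Proof.
  intros Hte Heu. induction Heu as [He | u c tau u' _ IH Hu' Hc].
  - now rewrite mul1_unit_r.
  - rewrite mul1_assoc. eapply descent_cons; eauto.
Qed.

Lemma descent_undo t k e b sg : descent t k e b sg ->
  exists h, in_gen h /\ phi t ** sg ** h = phi t.
Proof.
  induction 1 as [Ht | e b sg e' H (h & Hh & E) He' Hc].
  - exists (phi t). split; [exact (phi_in_gen Ht) |]. rewrite mul1_unit_r. exact (phi_idem Ht).
  - exists (phi e ** h). split; [exact (in_gen_mul (phi_in_gen (descent_level_end H)) Hh) |].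
    normalize. rewrite <- (descent_phi_end H). normalize.
    rw_prod (phi_component_absorb (descent_level_end H) Hc).
    now rewrite (descent_phi_end H).
Qed.

Definition normal_form_in k s b e (w : option T) : Prop :=
  exists t n C sg, chain k s t n C /\ descent t k e b sg /\ w = C ** sg.

Lemma normal_form_intro k s t n C e b sg :
  chain k s t n C -> descent t k e b sg -> normal_form_in k s b e (C ** sg).
Proof. intros HC Hsg. now exists t, n, C, sg. Qed.

Lemma chain_descent_phi_end k s t n C e b sg :
  chain k s t n C -> descent t k e b sg -> C ** sg ** phi e = C ** sg.
Proof.
  intros HC Hsg. rewrite <- (chain_phi_end HC). normalize.
  now rw_prod (descent_phi_end Hsg).
Qed.

Lemma normal_form_regular k s b e w : normal_form_in k s b e w -> regular_in_gen w.
Proof.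
  intros (t & n & C & sg & HC & Hsg & ->).
  destruct (chain_regular HC) as (q & Hq & Eq).
  destruct (descent_undo Hsg) as (h & Hh & Eh).
  exists (h ** q). split; [exact (in_gen_mul Hh Hq) |].
  assert (Hundo : C ** sg ** h = C).
  { rewrite <- (chain_phi_end HC). normalize. now rw_prod Eh. }
  normalize. rw_prod Hundo. now rw_prod Eq.
Qed.

Lemma chain_climb b p e t n D : inGamma (S (S b)) p -> component e p -> chain b e t n D ->
  exists m P D', chain (S b) p P m D' /\ component t P /\ phi p ** D = D' ** phi t.
Proof.
  intros Hp He HD. destruct n as [|n].
  - destruct (chain_0_inv HD) as [-> ->].
    exists 0, p, (phi p). repeat split; [now constructor | exact He].
  - destruct (chain_lift HD) as (K & K' & D0 & HD0 & Hr & Hl & ->).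
    assert (Hp_D : phi p ** (phi e ** phi (gc K) ** D0 ** phi (gc K') ** phi t)
                   = phi p ** phi e ** D0 ** phi t).
    { normalize. rw_prod (chain_centre_start HD0). now rw_prod (chain_centre_end HD0). }
    rewrite Hp_D. destruct (classic (p = K)) as [<- | Hne].
    + exists n, K', D0. repeat split; [exact HD0 | now left |].
      rewrite <- (chain_phi_start HD0) at 1. normalize.
      rw_prod (phi_component_absorb Hp (or_intror (eq_sym Hr))).
      now rewrite (chain_phi_start HD0).
    + assert (Hstep : chain (S b) p K 1 (phi p ** phi e ** phi K)).
      { apply chain_cons with p; [now constructor | exact (chain_level_start HD0) | exact Hne |].
        split; [exact (chain_level_start HD) | split; [exact He | now right]]. }
      destruct (chain_cat Hstep HD0) as [m Hm].
      exists m, K', (phi p ** phi e ** phi K ** D0). repeat split; [exact Hm | now left |].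
      now rw_prod (chain_phi_start HD0).
Qed.

Lemma normal_form_mul_chain k s b e t n w D :
  normal_form_in k s b e w -> chain b e t n D -> normal_form_in k s b t (w ** D).
Proof.
  intros (Tt & m & C & sg & HC & Hsg & ->). revert t n D.
  induction Hsg as [HTt | e b sg e' Hsg IH He' Hc]; intros t n D HD.
  - destruct (chain_cat HC HD) as [m' Hm']. rewrite mul1_unit_r, <- (mul1_unit_r (C ** D)).
    exact (normal_form_intro Hm' (descent_nil (chain_level_end HD))).
  - destruct (chain_climb (descent_level_end Hsg) Hc HD) as (m' & P & D' & HD' & Ht & E).
    destruct (IH _ _ _ HD') as (T2 & n2 & C2 & sg2 & HC2 & Hsg2 & E2).
    exists T2, n2, C2, (sg2 ** phi t). repeat split; [exact HC2 | |].
    + exact (descent_cons Hsg2 (chain_level_end HD) Ht).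
    + normalize. rewrite <- (chain_descent_phi_end HC Hsg).
      rw_prod (chain_phi_start HD). rw_prod E. now rw_prod E2.
Qed.

Lemma normal_form_climb k s b e t w : normal_form_in k s b e w -> b < k ->
  inGamma (S (S b)) t -> component e t -> normal_form_in k s (S b) t (w ** phi t).
Proof.
  intros (Tt & n & C & sg & HC & Hsg & ->) Hb Ht He.
  destruct (descent_last Hsg Hb) as (e0 & sg0 & Hsg0 & He0 & ->).
  pose proof (descent_level_end Hsg0) as He0_level.
  destruct (chain_extend (chain_nil He0_level) Ht (conj (descent_level_end Hsg) (conj He0 He)))
    as [m Hm].
  pose proof (normal_form_mul_chain (normal_form_intro HC Hsg0) Hm) as Hnf.
  normalize in Hnf. rewrite (chain_descent_phi_end HC Hsg0) in Hnf. normalize. exact Hnf.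
Qed.

Lemma chain_atoms u v : inGamma 1 u -> inGamma 1 v -> exists n, chain 0 u v n (phi u ** phi v).
Proof.
  intros Hu Hv. destruct (classic (u = v)) as [<- | Hne].
  - exists 0. rewrite (phi_idem Hu). now constructor.
  - exists 1. rewrite <- (phi_atom_unit_r Hu) at 1.
    apply chain_cons with u; [now constructor | exact Hv | exact Hne |].
    destruct Hu as [x ->], Hv as [y ->]. repeat split; now left.
Qed.

Lemma normal_form_phi_mul_atom a : forall u v, inGamma (S a) u -> inGamma 1 v ->
  normal_form_in a u 0 v (phi u ** phi v).
Proof.
  induction a as [| | a IH _] using nat_ind2; intros u v Hu Hv.
  - destruct (chain_atoms Hu Hv) as [n Hn]. rewrite <- mul1_unit_r.
    exact (normal_form_intro Hn (descent_nil Hv)).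
  - destruct (level_SS_inv Hu) as (_ & _ & Hr & _).
    destruct (chain_atoms Hr Hv) as [n HD].
    destruct (chain_climb Hu (or_intror eq_refl) HD) as (m & P & D' & HD' & HvP & E).
    rewrite <- (phi_level2_r Hu), <- mul1_assoc, E, <- (mul1_unit_l (phi v)).
    exact (normal_form_intro HD' (descent_cons (descent_nil (chain_level_end HD')) Hv HvP)).
  - destruct (level_SS_inv Hu) as (_ & Hc & Hr & _ & Hcr).
    destruct (IH _ _ Hc Hv) as (T0 & n0 & C0 & sg0 & HC0 & Hsg0 & E0).
    destruct (chain_climb Hr Hcr HC0) as (n1 & P1 & C1 & HC1 & HT0 & E1).
    destruct (chain_climb Hu (or_intror eq_refl) HC1) as (n2 & P2 & C2 & HC2 & HP1 & E2).
    assert (Hsg : descent P2 (S (S a)) T0 a (None ** phi P1 ** phi T0)).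
    { apply descent_cons with P1; [| exact (chain_level_end HC0) | exact HT0].
      apply descent_cons with P2; [| exact (chain_level_end HC1) | exact HP1].
      exact (descent_nil (chain_level_end HC2)). }
    replace (phi u ** phi v) with (C2 ** (None ** phi P1 ** phi T0 ** sg0)).
    { exact (normal_form_intro HC2 (descent_cat Hsg Hsg0)). }
    rewrite <- (sandwich_right Hu), <- (mul1_assoc _ (phi (gc u))), E0, mul1_unit_l.
    normalize. rw_prod E1. now rw_prod E2.
Qed.

Lemma normal_form_mul_atom k s b e t w : normal_form_in k s b e w -> inGamma 1 t ->
  normal_form_in k s 0 t (w ** phi t).
Proof.
  intros (Tt & n & C & sg & HC & Hsg & ->) Ht.
  destruct (normal_form_phi_mul_atom (descent_level_end Hsg) Ht)
    as (T1 & n1 & C1 & sg1 & HC1 & Hsg1 & E1).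
  destruct (normal_form_mul_chain (normal_form_intro HC Hsg) HC1)
    as (T2 & n2 & C2 & sg2 & HC2 & Hsg2 & E2).
  exists T2, n2, C2, (sg2 ** sg1). repeat split; [exact HC2 | exact (descent_cat Hsg2 Hsg1) |].
  rewrite <- (chain_descent_phi_end HC Hsg), <- mul1_assoc, E1. normalize.
  now rw_prod E2.
Qed.

Definition normal_form (w : option T) (e : gam X) : Prop := exists k s b, normal_form_in k s b e w.

Definition L_normal (x : option T) (e : gam X) : Prop :=
  exists w, L_related x w /\ normal_form w e.

Lemma phi_normal_form i g : inGamma (S i) g -> normal_form (phi g) g.
Proof.
  intros Hg. exists i, g, i. rewrite <- mul1_unit_r.
  exact (normal_form_intro (chain_nil Hg) (descent_nil Hg)).
Qed.

(* [C ** phi t] need not be a normal form; lifting [C] one level shows that it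
   is L-related to one. *)
Lemma chain_mul_phi_L_normal k s u n C t : chain k s u n C -> inGamma (S (S k)) t ->
  component u t -> L_normal (C ** phi t) t.
Proof.
  intros HC Ht Hu. destruct n as [|n].
  - destruct (chain_0_inv HC) as [-> ->]. exists (phi t). split; [| exact (phi_normal_form Ht)].
    exists (phi s), (phi t). repeat split.
    + right. exact (phi_in_gen (chain_level_start HC)).
    + right. exact (phi_in_gen Ht).
    + now rewrite mul1_assoc, (phi_component_absorb Ht Hu).
  - destruct (chain_lift HC) as (G & G' & C' & HC' & <- & Hl & ->).
    destruct (chain_extend HC' Ht (conj (chain_level_end HC) (conj (or_introl (eq_sym Hl)) Hu)))
      as [m Hm].
    exists (C' ** phi u ** phi t). split.
    2: { exists (S k), G, (S k). rewrite <- mul1_unit_r.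
         exact (normal_form_intro Hm (descent_nil Ht)). }
    pose proof (chain_level_start HC') as HG.
    exists (phi (gr G)), (phi G). repeat split.
    + right. exact (phi_in_gen (chain_level_start HC)).
    + right. exact (phi_in_gen HG).
    + normalize. rw_prod (chain_centre_end HC'). now rw_prod (chain_centre_start HC').
    + transitivity (phi G ** phi (gr G) ** phi (gc G) ** C' ** phi u ** phi t).
      * rw_prod (sandwich_right HG). now rewrite (chain_phi_start HC').
      * normalize. rw_prod (chain_centre_end HC'). now rw_prod (chain_centre_start HC').
Qed.

Lemma normal_form_mul_phi_left j t w : inGamma (S (S j)) t -> normal_form w (gl t) ->
  L_normal (w ** phi t) t.
Proof.
  intros Ht (k & s & b & Tt & n & C & sg & HC & Hsg & ->).
  destruct (level_SS_inv Ht) as (Hl & _).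
  pose proof (level_unique (descent_level_end Hsg) Hl) as Hb. injection Hb as ->.
  destruct (Nat.eq_dec j k) as [<- | Hne].
  - destruct (descent_top_inv Hsg) as [<- ->]. rewrite mul1_unit_r.
    exact (chain_mul_phi_L_normal HC Ht (or_introl eq_refl)).
  - exists (C ** sg ** phi t). split; [apply L_related_refl |].
    assert (Hjk : j < k) by (pose proof (descent_le Hsg); lia).
    exists k, s, (S j).
    exact (normal_form_climb (normal_form_intro HC Hsg) Hjk Ht (or_introl eq_refl)).
Qed.

Lemma normal_form_mul_phi j : forall t, inGamma (S j) t -> forall w e, normal_form w e ->
  L_normal (w ** phi t) t.
Proof.
  induction j as [| | j IHc IHl] using nat_ind2; intros t Ht w e Hw.
  - destruct Hw as (k & s & b & Hw). exists (w ** phi t). split; [apply L_related_refl |].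
    exists k, s, 0. exact (normal_form_mul_atom Hw Ht).
  - destruct (level_SS_inv Ht) as (Hl & _).
    rewrite <- (phi_level2_l Ht), mul1_assoc.
    apply (normal_form_mul_phi_left Ht).
    destruct Hw as (k & s & b & Hw). exists k, s, 0. exact (normal_form_mul_atom Hw Hl).
  - destruct (level_SS_inv Ht) as (Hl & Hc & _).
    destruct (IHc _ Hc _ _ Hw) as (w1 & L1 & N1).
    destruct (IHl _ Hl _ _ N1) as (w2 & L2 & N2).
    destruct (normal_form_mul_phi_left Ht N2) as (w3 & L3 & N3).
    exists w3. split; [| exact N3].
    rewrite <- (sandwich_left Ht). normalize.
    apply L_related_trans with (w1 ** phi (gl t) ** phi t); [now do 2 apply L_related_mul_r |].
    apply L_related_trans with (w2 ** phi t); [now apply L_related_mul_r | exact L3].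
Qed.

Lemma L_normal_regular x e : L_normal x e -> regular_in_gen x.
Proof.
  intros (w & Hxw & k & s & b & Hw).
  exact (L_related_regular Hxw (normal_form_regular Hw)).
Qed.

Hypothesis A_in_image : forall a, A a -> exists g, Gamma g /\ g <> G1 /\ phi g = Some a.

Lemma A_level a : A a -> exists i g, inGamma (S i) g /\ phi g = Some a.
Proof.
  intros Ha. destruct (A_in_image Ha) as (g & [[|i] Hg] & Hne & E); [contradiction |].
  now exists i, g.
Qed.

Lemma L_normal_mul_gen b : generated op A b ->
  forall x e, L_normal x e -> exists e', L_normal (x ** Some b) e'.
Proof.
  induction 1 as [a Ha | a b _ IHa _ IHb]; intros x e Hx.
  - destruct Hx as (w & Hxw & Hw), (A_level Ha) as (i & g & Hg & <-).
    destruct (normal_form_mul_phi Hg Hw) as (w' & L' & N').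
    exists g, w'. split; [| exact N']. exact (L_related_trans (L_related_mul_r _ Hxw) L').
  - destruct (IHa x e Hx) as [e' Hxa].
    destruct (IHb _ _ Hxa) as [e'' Hxab]. exists e''. now rewrite <- mul1_assoc in Hxab.
Qed.

Lemma generated_L_normal a : generated op A a -> exists e, L_normal (Some a) e.
Proof.
  induction 1 as [a Ha | a b _ [e Ha] Hb _].
  - destruct (A_level Ha) as (i & g & Hg & <-).
    exists g, (phi g). split; [apply L_related_refl | exact (phi_normal_form Hg)].
  - exact (L_normal_mul_gen Hb Ha).
Qed.

Lemma generated_regular a : generated op A a -> exists b, generated op A b /\ op (op a b) a = a.
Proof.
  intros Ha. destruct (generated_L_normal Ha) as [e Hae].
  destruct (L_normal_regular Hae) as (q & (b & -> & Hb) & E).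
  exists b. split; [exact Hb |]. now injection E.
Qed.

End SkeletonRegular.

Theorem corollary5p2 (T : Type) (op : T -> T -> T)
  (assoc : forall a b c : T, op a (op b c) = op (op a b) c)
  (A : T -> Prop) (hA : is_skeleton op A) :
  regular_subsemigroup op (generated op A).
Proof.
  destruct hA as (X & phi & _ & (Hidem & _ & _ & Hunit & Hsandwich) & Hphi_A & HA_phi).
  split.
  - intros a b Ha Hb. now constructor 2.
  - intros a Ha. exact (generated_regular assoc Hidem Hunit Hsandwich Hphi_A HA_phi Ha).
Qed.
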